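(* For every $\mathcal{C}$-orderable group $G$, the intersection of any family of $\mathcal{C}$-relatively convex subgroups of $G$ is $\mathcal{C}$-relatively convex.
   Context: A $\mathcal{C}$-ordering is a total order $\preceq$ on $G$ invariant under left multiplication such that for all $f\succ id$, $g\succ id$ there is $n\in\mathbb{N}$ with $fg^n\succ g$. A subgroup $H$ is convex for $\preceq$ if $f_1\prec h\prec f_2$ with $f_1,f_2\in H$ implies $h\in H$; $H$ is $\mathcal{C}$-relatively convex if there is a $\mathcal{C}$-ordering of $G$ for which $H$ is convex. *)

Set Implicit Arguments.

Record group := Group {
  carrier :> Type;
  gmul : carrier -> carrier -> carrier;
  gone : carrier;
  ginv : carrier -> carrier;
  gmulA : forall x y z, gmul x (gmul y z) = gmul (gmul x y) z;
  gmul1 : forall x, gmul gone x = x;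
  gmulV : forall x, gmul (ginv x) x = gone
}.

Section Defs.
Context {G : group}.

Fixpoint gpow (g : G) (n : nat) : G :=
  match n with
  | O => gone G
  | S m => gmul G (gpow g m) g
  end.

Definition total_order (le : G -> G -> Prop) : Prop :=
  (forall x, le x x) /\
  (forall x y, le x y -> le y x -> x = y) /\
  (forall x y z, le x y -> le y z -> le x z) /\
  (forall x y, le x y \/ le y x).

Definition strict (le : G -> G -> Prop) (x y : G) : Prop := le x y /\ x <> y.

Definition left_invariant (le : G -> G -> Prop) : Prop :=
  forall h x y, le x y -> le (gmul G h x) (gmul G h y).

Definition C_ordering (le : G -> G -> Prop) : Prop :=
  total_order le /\ left_invariant le /\
  (forall f g, strict le (gone G) f -> strict le (gone G) g ->
     exists n : nat, strict le g (gmul G f (gpow g n))).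

Definition C_orderable : Prop := exists le, C_ordering le.

Definition is_subgroup (H : G -> Prop) : Prop :=
  H (gone G) /\ (forall x y, H x -> H y -> H (gmul G x y)) /\
  (forall x, H x -> H (ginv G x)).

Definition convex (le : G -> G -> Prop) (H : G -> Prop) : Prop :=
  forall f1 f2 h, H f1 -> H f2 -> strict le f1 h -> strict le h f2 -> H h.

Definition C_rel_convex (H : G -> Prop) : Prop :=
  is_subgroup H /\ exists le, C_ordering le /\ convex le H.

End Defs.

(* Well-order the index set.  An element outside some [H i] is declared
   positive when it is positive for the C-ordering attached to the first index
   [m] whose subgroup it leaves; an element of every [H i] is compared in a
   fixed C-ordering of [G].  Convexity of [H m] for its ordering makes
   positivity modulo [H m] invariant under multiplication by elements of [H m]
   on either side, so these positives form a cone defining a left-invariant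
   total order.  The C-property is inherited from the orderings at the first
   index.  Finally, if [h] lies strictly between two members [f1], [f2] of the
   intersection but leaves it first at [m], then [f1^-1 h] and [h^-1 f2] are
   positive modulo [H m], hence so is their product [f1^-1 f2], which lies in
   [H m]. *)

From mathcomp Require Import ssreflect ssrbool eqtype boolp.
From mathcomp Require wochoice.

Set Implicit Arguments.
Unset Strict Implicit.

Section GroupLemmas.
Context {G : group}.
Local Notation "x ** y" := (gmul G x y) (at level 40, left associativity).
Local Notation "1" := (gone G).
Local Notation "x ^-1" := (ginv G x).

Lemma mulgV (x : G) : x ** x^-1 = 1.
Proof.
by rewrite -[LHS]gmul1 -{1}(gmulV G x^-1) -gmulA (gmulA G x^-1) gmulV gmul1 gmulV.
Qed.

Lemma mulg1 (x : G) : x ** 1 = x.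
Proof. by rewrite -(gmulV G x) gmulA mulgV gmul1. Qed.

Lemma mulKg (x y : G) : x^-1 ** (x ** y) = y.
Proof. by rewrite gmulA gmulV gmul1. Qed.

Lemma mulKVg (x y : G) : x ** (x^-1 ** y) = y.
Proof. by rewrite gmulA mulgV gmul1. Qed.

Lemma mulgI (x y z : G) : x ** y = x ** z -> y = z.
Proof. by move=> Exyz; rewrite -(mulKg x y) Exyz mulKg. Qed.

Lemma invgK (x : G) : (x^-1)^-1 = x.
Proof. by apply: (@mulgI x^-1); rewrite mulgV gmulV. Qed.

Lemma invMg (x y : G) : (x ** y)^-1 = y^-1 ** x^-1.
Proof. by apply: (@mulgI (x ** y)); rewrite mulgV -gmulA (gmulA G y) mulgV gmul1 mulgV. Qed.

Lemma invg1 : (1 : G)^-1 = 1.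
Proof. by rewrite -[LHS]gmul1 mulgV. Qed.

Lemma gpowS (g : G) n : gpow g (S n) = g ** gpow g n.
Proof.
elim: n => [|n IHn] /=; first by rewrite gmul1 mulg1.
by move: IHn => /= IHn; rewrite {1}IHn -gmulA.
Qed.

Lemma gpow_double (g : G) n : gpow (g ** g) n = gpow g (n + n).
Proof. by elim: n => [|n IHn] //=; rewrite IHn -plus_n_Sm /= gmulA. Qed.

Section Subgroup.
Context {H : G -> Prop} (Hsub : is_subgroup H).

Lemma subg1 : H 1. Proof. by case: Hsub. Qed.

Lemma subgM x y : H x -> H y -> H (x ** y).
Proof. by case: Hsub => _ [closedM _]; apply: closedM. Qed.

Lemma subgV {x} : H x^-1 <-> H x.
Proof.
have closedV z : H z -> H z^-1 by case: Hsub => _ [_]; apply.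
by split=> [/closedV|]; [rewrite invgK | exact: closedV].
Qed.

Lemma subgMl {x y} : H x -> (H (x ** y) <-> H y).
Proof.
move=> Hx; split=> [Hxy|]; last exact: subgM.
by rewrite -(mulKg x y); apply: subgM => //; apply/subgV.
Qed.

Lemma subgMr {x y} : H y -> (H (x ** y) <-> H x).
Proof. by move=> Hy; rewrite -subgV invMg subgMl ?subgV. Qed.

Lemma subg_gpow g n : H g -> H (gpow g n).
Proof. by move=> Hg; elim: n => [|n IHn] /=; [exact: subg1 | exact: subgM]. Qed.

End Subgroup.

Lemma subgroup_intersection (I : Type) (H : I -> G -> Prop) :
  (forall i, is_subgroup (H i)) -> is_subgroup (fun g => forall i, H i g).
Proof.
move=> Hsub; split; first by move=> i; apply: subg1.
split; first by move=> x y Hx Hy i; apply: subgM.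
by move=> x Hx i; apply/subgV.
Qed.

Section Ordering.
Variables (le : G -> G -> Prop) (le_total : total_order le) (le_inv : left_invariant le).
Local Notation lt := (strict le).

Lemma lt_trans x y z : lt x y -> lt y z -> lt x z.
Proof.
case: le_total => _ [le_anti [le_tr _]] [lexy nexy] [leyz neyz].
by split; [exact: le_tr lexy leyz | move=> Exz; subst z; apply: nexy; apply: le_anti].
Qed.

Lemma lt_asym x y : lt x y -> ~ lt y x.
Proof. by move=> /lt_trans lxy /lxy[]. Qed.

Lemma lt_total x y : x <> y -> lt x y \/ lt y x.
Proof.
move=> nexy; case: le_total => _ [_ [_ le_tot]].
by case: (le_tot x y) => lexy; [left | right]; split=> //; apply: not_eq_sym.
Qed.

Lemma lt_mul2l h x y : lt (h ** x) (h ** y) <-> lt x y.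
Proof.
have lt_mull k u v : lt u v -> lt (k ** u) (k ** v).
  by move=> [leuv neuv]; split; [exact: le_inv | move/mulgI].
by split=> [/(lt_mull h^-1)|/lt_mull //]; rewrite !mulKg.
Qed.

Lemma lt1V z : lt 1 z^-1 <-> lt z 1.
Proof. by rewrite -(lt_mul2l z) mulg1 mulgV. Qed.

Lemma lt1_asymV z : lt 1 z -> ~ lt 1 z^-1.
Proof. by move=> lt1z /lt1V ltz1; apply: lt_asym lt1z ltz1. Qed.

Lemma lt_mulr_gt1 b a : lt 1 a -> lt b (b ** a).
Proof. by rewrite -(lt_mul2l b) mulg1. Qed.

End Ordering.

(* [pos_mod le H z]: the left coset [z H] lies above [H] in the order that a
   convex subgroup [H] induces on its left cosets. *)
Definition pos_mod (le : G -> G -> Prop) (H : G -> Prop) (z : G) : Prop :=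
  strict le 1 z /\ ~ H z.

Section ConvexSubgroup.
Variables (le : G -> G -> Prop) (le_total : total_order le) (le_inv : left_invariant le).
Variables (H : G -> Prop) (Hsub : is_subgroup H) (Hconv : convex le H).
Local Notation lt := (strict le).
Local Notation pos := (pos_mod le H).

Lemma pos_mod_gt z h : pos z -> H h -> lt h z.
Proof.
move=> [lt1z Hnz] Hh; have nehz : h <> z by move=> Ehz; subst h.
case: (lt_total le_total nehz) => // ltzh.
by exfalso; apply: Hnz; apply: Hconv (subg1 Hsub) Hh lt1z ltzh.
Qed.

Lemma pos_mod_lt z w : pos z -> lt z w -> pos w.
Proof.
move=> [lt1z Hnz] ltzw; split; first exact: lt_trans lt1z ltzw.
by move=> Hw; apply: Hnz; apply: Hconv (subg1 Hsub) Hw lt1z ltzw.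
Qed.

Lemma pos_mod_mull h z : H h -> pos z -> pos (h ** z).
Proof.
move=> Hh posz; split; last by move=> /(subgMl Hsub Hh); case: posz.
by rewrite -(mulgV h) (lt_mul2l le_inv); apply: pos_mod_gt => //; apply/(subgV Hsub).
Qed.

Lemma pos_mod_mulr z h : pos z -> H h -> pos (z ** h).
Proof.
move=> [lt1z Hnz] Hh; split; last by move=> /(subgMr Hsub Hh).
have nezh1 : z ** h <> 1 by move=> Ezh; apply: Hnz; rewrite -(subgMr Hsub Hh) Ezh; apply: subg1.
case: (lt_total le_total (not_eq_sym nezh1)) => // /(lt_mul2l le_inv z^-1).
rewrite mulKg mulg1 => lthzV; exfalso; apply: Hnz; apply/(subgV Hsub).
by apply: Hconv Hh (subg1 Hsub) lthzV _; apply/(lt1V le_inv); rewrite invgK.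
Qed.

Lemma pos_mod_mul a b : pos a -> pos b -> pos (a ** b).
Proof. by move=> posa [lt1b _]; apply: pos_mod_lt posa _; apply: lt_mulr_gt1. Qed.

Lemma pos_mod_mulW a b :
  H a \/ pos a -> H b \/ pos b -> pos a \/ pos b -> pos (a ** b).
Proof.
by case=> [Ha|posa] [Hb|posb] [[_ Hna]|[_ Hnb]];
  by [| apply: pos_mod_mull | apply: pos_mod_mulr | apply: pos_mod_mul].
Qed.

Lemma pos_mod_total z : ~ H z -> pos z \/ pos z^-1.
Proof.
move=> Hnz; have nez1 : 1 <> z by move=> E1z; apply: Hnz; rewrite -E1z; apply: subg1.
case: (lt_total le_total nez1) => [lt1z|ltz1]; [left | right] => //.
by split; [apply/lt1V | rewrite subgV].
Qed.

End ConvexSubgroup.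

Section PositiveCone.
Variable P : G -> Prop.
Hypothesis P_mul : forall a b, P a -> P b -> P (a ** b).
Hypothesis P_asym : forall z, P z -> ~ P z^-1.
Hypothesis P_total : forall z, z <> 1 -> P z \/ P z^-1.

Definition cone_le (x y : G) : Prop := x = y \/ P (x^-1 ** y).

Lemma strict_cone_le x y : strict cone_le x y <-> P (x^-1 ** y).
Proof.
split=> [[[Exy|//] nexy]|Pxy]; first by case: (nexy Exy).
split; first by right.
move=> Exy; subst y; rewrite gmulV in Pxy.
by apply: (P_asym Pxy); rewrite invg1.
Qed.

Lemma cone_le_total_order : total_order cone_le.
Proof.
split; first by left.
split.
  move=> x y [//|Pxy] [//|Pyx]; exfalso; apply: (P_asym Pxy).
  by rewrite invMg invgK.
split.
  move=> x y z [<-//|Pxy] [<-|Pyz]; first by right.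
  by right; rewrite -(mulKVg y z) gmulA; apply: P_mul.
move=> x y; case: (EM (x = y)) => [<-|nexy]; first by left; left.
have nexy1 : x^-1 ** y <> 1 by move=> E; apply: nexy; rewrite -(mulKVg x y) E mulg1.
case: (P_total nexy1) => Pxy; [left | right]; right => //.
by rewrite invMg invgK in Pxy.
Qed.

Lemma cone_le_left_invariant : left_invariant cone_le.
Proof.
by move=> h x y [<-|Pxy]; [left | right; rewrite invMg -gmulA mulKg].
Qed.

Lemma cone_le_C_ordering :
  (forall f g, P f -> P g -> exists n, P (g^-1 ** (f ** gpow g n))) ->
  C_ordering cone_le.
Proof.
move=> P_conrad; split; first exact: cone_le_total_order.
split; first exact: cone_le_left_invariant.
move=> f g /strict_cone_le + /strict_cone_le; rewrite invg1 !gmul1 => Pf Pg.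
have [n Pn] := P_conrad f g Pf Pg.
by exists n; apply/strict_cone_le.
Qed.

End PositiveCone.
End GroupLemmas.

Lemma exists_well_order (I : Type) : exists R : I -> I -> Prop,
  (forall x y, R x y -> R y x -> x = y) /\
  (forall Q : I -> Prop, (exists i, Q i) -> exists m, Q m /\ forall k, Q k -> R m k).
Proof.
have [R R_wo] := wochoice.well_ordering_principle {classic I}.
exists (fun x y => R x y); split.
  move=> x y Rxy Ryx; apply: (@wochoice.wo_chain_antisymmetric _ R predT) => //.
    by move=> A _; apply: R_wo.
  by rewrite Rxy Ryx.
move=> Q [i Qi].
have [|m [[/asboolP Qm lbm] _]] := R_wo (fun k => `[< Q k >]).
  by exists i; apply/asboolP.
by exists m; split=> // k Qk; apply: lbm; apply/asboolP.
Qed.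

Section Lexicographic.
Variables (G : group) (I : Type) (H : I -> G -> Prop).
Hypothesis Hsub : forall i, is_subgroup (H i).
Variable R : I -> I -> Prop.
Hypothesis R_anti : forall x y, R x y -> R y x -> x = y.
Hypothesis R_least :
  forall Q : I -> Prop, (exists i, Q i) -> exists m, Q m /\ forall k, Q k -> R m k.
Variables (lei : I -> G -> G -> Prop) (le0 : G -> G -> Prop).
Hypothesis lei_P : forall i, C_ordering (lei i) /\ convex (lei i) (H i).
Hypothesis le0_C : C_ordering le0.

Local Notation "x ** y" := (gmul G x y) (at level 40, left associativity).
Local Notation "1" := (gone G).
Local Notation "x ^-1" := (ginv G x).
Local Notation pos m := (pos_mod (lei m) (H m)).
Local Notation in_all z := (forall i, H i z).

Let lei_C i : C_ordering (lei i) := proj1 (lei_P i).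
Let lei_total i : total_order (lei i) := proj1 (lei_C i).
Let lei_inv i : left_invariant (lei i) := proj1 (proj2 (lei_C i)).
Let lei_convex i : convex (lei i) (H i) := proj2 (lei_P i).
Let le0_total : total_order le0 := proj1 le0_C.
Let le0_inv : left_invariant le0 := proj1 (proj2 le0_C).
Arguments lei_inv : clear implicits.
Arguments lei_convex : clear implicits.

(* [~ R m k] means that [k] comes strictly before [m]. *)
Definition below (m : I) (z : G) : Prop := forall k, ~ R m k -> H k z.

Definition exit_index (z : G) (m : I) : Prop := ~ H m z /\ below m z.

Definition lex_pos (z : G) : Prop :=
  (exists m, exit_index z m /\ strict (lei m) 1 z) \/ (in_all z /\ strict le0 1 z).

Lemma least_failure (Q : I -> Prop) :
  ~ (forall i, Q i) -> exists m, ~ Q m /\ forall k, ~ R m k -> Q k.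
Proof.
move=> /existsNP /R_least [m [Qnm leastm]]; exists m; split=> // k nRmk.
by apply: contrapT => Qnk; apply: nRmk; apply: leastm.
Qed.

Lemma exit_index_unique z m m' : exit_index z m -> exit_index z m' -> m = m'.
Proof.
move=> [Hnm bm] [Hnm' bm'].
by apply: R_anti; apply: contrapT => nR; [apply: Hnm'; apply: bm | apply: Hnm; apply: bm'].
Qed.

Lemma belowM m x y : below m x -> below m y -> below m (x ** y).
Proof. by move=> bx by_ k nRmk; apply: subgM; [apply: Hsub | apply: bx | apply: by_]. Qed.

Lemma belowV m z : below m z^-1 <-> below m z.
Proof. by split=> bz k /bz; rewrite subgV. Qed.

Lemma below_all m z : in_all z -> below m z.
Proof. by move=> Hz k _. Qed.

Lemma lex_posI m z : below m z -> pos m z -> lex_pos z.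
Proof. by move=> bz [lt1z Hnz]; left; exists m. Qed.

Lemma lex_pos_at_exit z m : lex_pos z -> exit_index z m -> pos m z.
Proof.
case=> [[m' [exitm' lt1z]]|[Hz _]] [Hnz bz]; last by case: (Hnz (Hz m)).
by have Em := exit_index_unique (conj Hnz bz) exitm'; subst m'; split.
Qed.

Lemma lex_pos_in_all z : lex_pos z -> in_all z -> strict le0 1 z.
Proof. by case=> [[m [[Hnz _] _]]|[_ //]] /(_ m). Qed.

Lemma lex_pos_nonneg m z : lex_pos z -> below m z -> H m z \/ pos m z.
Proof.
move=> posz bz; case: (EM (H m z)) => [|Hnz]; [left | right] => //.
exact: lex_pos_at_exit.
Qed.

Lemma lex_pos_mul a b : lex_pos a -> lex_pos b -> lex_pos (a ** b).
Proof.
move=> posa posb; case: (EM (forall i, H i a /\ H i b)) => [Hab|].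
  have Ha : in_all a by move=> i; case: (Hab i).
  have Hb : in_all b by move=> i; case: (Hab i).
  right; split; first by move=> i; apply: subgM.
  apply: (lt_trans le0_total (lex_pos_in_all posa Ha)).
  exact: (lt_mulr_gt1 le0_inv _ (lex_pos_in_all posb Hb)).
move=> /least_failure [m [Hnab bab]].
have ba : below m a by move=> k /bab[].
have bb : below m b by move=> k /bab[].
apply: (lex_posI (belowM ba bb)).
have na := lex_pos_nonneg posa ba; have nb := lex_pos_nonneg posb bb.
apply: (pos_mod_mulW (lei_total m) (lei_inv m) (Hsub m) (lei_convex m) na nb).
case: na => [Ha|]; [right | by left].
by case: nb => // Hb; case: Hnab.
Qed.

Lemma lex_pos_antisym z : lex_pos z -> ~ lex_pos z^-1.
Proof.
case=> [[m [[Hnz bz] lt1z]]|[Hz lt1z]] posV.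
  have [lt1zV _] : pos m z^-1.
    by apply: lex_pos_at_exit posV _; split; [rewrite subgV | apply/belowV].
  exact: (lt1_asymV (lei_total m) (lei_inv m) lt1z lt1zV).
have HzV : in_all z^-1 by move=> i; apply/subgV.
exact: (lt1_asymV le0_total le0_inv lt1z (lex_pos_in_all posV HzV)).
Qed.

Lemma lex_pos_total z : z <> 1 -> lex_pos z \/ lex_pos z^-1.
Proof.
move=> nez1; case: (EM (in_all z)) => [Hz|/least_failure [m [Hnz bz]]].
  have HzV : in_all z^-1 by move=> i; apply/subgV.
  case: (lt_total le0_total (not_eq_sym nez1)) => [lt1z|ltz1]; [left | right]; right.
    by split.
  by split; last apply/lt1V.
case: (pos_mod_total (lei_total m) (lei_inv m) (Hsub m) Hnz) => posz; [left | right].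
  exact: lex_posI bz posz.
by apply: lex_posI posz; apply/belowV.
Qed.

(* When [g] leaves the family first, the C-property of [lei m] is applied to
   [f g] and [g g] rather than to [f] and [g]: the resulting element exceeds
   [g], so it stays outside [H m]. *)
Lemma lex_pos_conrad f g :
  lex_pos f -> lex_pos g -> exists n, lex_pos (g^-1 ** (f ** gpow g n)).
Proof.
move=> posf posg; case: (EM (forall i, H i f /\ H i g)) => [Hfg|].
  have Hf : in_all f by move=> i; case: (Hfg i).
  have Hg : in_all g by move=> i; case: (Hfg i).
  have [n ltn] := proj2 (proj2 le0_C) f g (lex_pos_in_all posf Hf) (lex_pos_in_all posg Hg).
  exists n; right; split.
    by move=> i; apply: subgM; [|apply/subgV | apply: subgM; [| |apply: subg_gpow]].
  by rewrite -(gmulV G g) (lt_mul2l le0_inv).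
move=> /least_failure [m [Hnfg bfg]].
have bf : below m f by move=> k /bfg[].
have bg : below m g by move=> k /bfg[].
have [Hg|posgm] := lex_pos_nonneg posg bg.
  exists 0; rewrite /= mulg1.
  apply: (lex_posI (belowM (proj2 (belowV _ _) bg) bf)).
  apply: (pos_mod_mull (lei_total m) (lei_inv m) (Hsub m) (lei_convex m)).
    by apply/subgV.
  by case: (lex_pos_nonneg posf bf) => // Hf; case: Hnfg.
have posfg : pos m (f ** g).
  by apply: (pos_mod_mulW (lei_total m) (lei_inv m) (Hsub m) (lei_convex m)
                          (lex_pos_nonneg posf bf)); right.
have posgg := pos_mod_mul (lei_total m) (lei_inv m) (Hsub m) (lei_convex m) posgm posgm.
have [n ltn] := proj2 (proj2 (lei_C m)) _ _ (proj1 posfg) (proj1 posgg).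
rewrite gpow_double -gmulA -gpowS in ltn.
exists (S (n + n)); apply: (lex_posI (m:=m)).
  apply: belowM; first by apply/belowV.
  by apply: belowM bf _ => k /bg; apply: subg_gpow.
apply: (pos_mod_lt (lei_total m) (Hsub m) (lei_convex m) posgm).
by rewrite -(lt_mul2l (lei_inv m) g) mulKVg.
Qed.

Lemma lex_C_ordering : C_ordering (cone_le lex_pos).
Proof.
exact: (cone_le_C_ordering lex_pos_mul lex_pos_antisym lex_pos_total lex_pos_conrad).
Qed.

Lemma lex_convex : convex (cone_le lex_pos) (fun g => in_all g).
Proof.
move=> f1 f2 h Hf1 Hf2 /(strict_cone_le lex_pos_antisym) pos1.
move=> /(strict_cone_le lex_pos_antisym) pos2.
have Hf1V : in_all f1^-1 by move=> i; apply/subgV.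
apply: contrapT => /least_failure [m [Hnh bh]].
have pos1m : pos m (f1^-1 ** h).
  apply: lex_pos_at_exit pos1 _; split; last exact: (belowM (below_all Hf1V) bh).
  by rewrite (subgMl (Hsub m) (Hf1V m)).
have pos2m : pos m (h^-1 ** f2).
  apply: lex_pos_at_exit pos2 _; split.
    by rewrite (subgMr (Hsub m) (Hf2 m)) subgV.
  exact: (belowM (proj2 (belowV _ _) bh) (below_all Hf2)).
have [_ []] := pos_mod_mul (lei_total m) (lei_inv m) (Hsub m) (lei_convex m) pos1m pos2m.
by rewrite -gmulA mulKVg; exact: (subgM (Hsub m) (Hf1V m) (Hf2 m)).
Qed.

End Lexicographic.

Theorem mainTheorem19 (G : group) (I : Type) (H : I -> G -> Prop) :
  @C_orderable G ->
  (forall i, C_rel_convex (H i)) ->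
  C_rel_convex (fun g : G => forall i, H i g).
Proof.
move=> [le0 le0_C] HC.
have Hsub i : is_subgroup (H i) := proj1 (HC i).
have [lei lei_P] := choice (fun i => proj2 (HC i)).
have [R [R_anti R_least]] := exists_well_order I.
split; first exact: subgroup_intersection.
exists (cone_le (lex_pos H R lei le0)); split.
  exact: (lex_C_ordering Hsub R_anti R_least lei_P le0_C).
exact: (lex_convex Hsub R_anti R_least lei_P le0_C).
Qed.
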